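(* Let $(R,R^+)$ be a sheafy Tate–Huber pair with pseudo-uniformizer $\varpi\in R^+$, and let $P$ be a finite rank projective $R$-module endowed with its canonical topology. Then every $R^+$-submodule $M\subseteq P$ with $M[1/\varpi]=P$ is open in $P$.
   Context: The canonical topology on a finite projective $R$-module $P$ (in the sense of Kedlaya–Liu) is the quotient topology induced by any $R$-linear surjection $R^n\to P$; it makes $P$ complete and does not depend on the choice of surjection. *)

From HB Require Import structures.
From mathcomp Require Import all_boot all_order all_algebra.
From mathcomp Require Import boolp classical_sets.
Set Implicit Arguments. Unset Strict Implicit. Unset Printing Implicit Defensive.
Import GRing.Theory.
Local Open Scope ring_scope.
Local Open Scope classical_set_scope.

Definition is_topology (T : Type) (O : set (set T)) : Prop :=
  [/\ O setT, O set0,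
      (forall U V, O U -> O V -> O (U `&` V)) &
      (forall F : set (set T), F `<=` O -> O (\bigcup_(U in F) U))].

Definition topological_ring (R : pzRingType) (O : set (set R)) : Prop :=
  [/\ is_topology O,
      (forall U x y, O U -> U (x + y) -> exists V W,
          [/\ O V, O W, V x, W y & forall a b, V a -> W b -> U (a + b)]),
      (forall U x, O U -> U (- x) -> exists V,
          [/\ O V, V x & forall a, V a -> U (- a)]) &
      (forall U x y, O U -> U (x * y) -> exists V W,
          [/\ O V, O W, V x, W y & forall a b, V a -> W b -> U (a * b)])].

Definition is_subring (R : pzRingType) (A : set R) : Prop :=
  [/\ A 1, (forall x y, A x -> A y -> A (x - y)) &
      (forall x y, A x -> A y -> A (x * y))].

Definition span (R : pzRingType) (A S : set R) : set R :=
  [set x | exists s : seq (R * R),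
     (forall p, p \in s -> A p.1 /\ S p.2) /\ x = \sum_(p <- s) p.1 * p.2].

Fixpoint prods (R : pzRingType) (S : set R) (n : nat) : set R :=
  match n with
  | 0 => [set 1]
  | m.+1 => [set z | exists a b, [/\ S a, prods S m b & z = a * b]]
  end.

(* I^n for the ideal I of R0 generated by the finite list g *)
Definition ideal_pow (R : pzRingType) (R0 : set R) (g : seq R) (n : nat) : set R :=
  span R0 (prods [set x | x \in g] n).

(* Huber ring: there is an open subring R0 (ring of definition) and a finitely
   generated ideal I of R0 such that the topology on R0 is I-adic. *)
Definition huber_ring (R : pzRingType) (O : set (set R)) : Prop :=
  topological_ring O /\
  exists (R0 : set R) (g : seq R),
    [/\ is_subring R0, O R0, (forall x, x \in g -> R0 x),
        (forall n, O (ideal_pow R0 g n)) &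
        (forall U, O U -> U 0 -> exists n, ideal_pow R0 g n `<=` U)].

Definition top_nilpotent (R : pzRingType) (O : set (set R)) (x : R) : Prop :=
  forall U, O U -> U 0 -> exists N, forall n, (N <= n)%N -> U (x ^+ n).

Definition pseudo_uniformizer (R : unitRingType) (O : set (set R)) (x : R) : Prop :=
  x \is a GRing.unit /\ top_nilpotent O x.

Definition bounded_set (R : pzRingType) (O : set (set R)) (S : set R) : Prop :=
  forall U, O U -> U 0 -> exists V, [/\ O V, V 0 & forall a b, V a -> S b -> U (a * b)].

Definition power_bounded (R : pzRingType) (O : set (set R)) (x : R) : Prop :=
  bounded_set O [set y | exists n, y = x ^+ n].

Definition integrally_closed (R : comUnitRingType) (A : set R) : Prop :=
  forall (p : {poly R}) (x : R), p \is monic -> (forall i, A p`_i) -> root p x -> A x.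

Definition ring_of_integral_elements (R : comUnitRingType) (O : set (set R)) (Rp : set R)
  : Prop :=
  [/\ is_subring Rp, O Rp, integrally_closed Rp & forall x, Rp x -> power_bounded O x].

Definition huber_pair (R : comUnitRingType) (O : set (set R)) (Rp : set R) : Prop :=
  huber_ring O /\ ring_of_integral_elements O Rp.

Definition tate_huber_pair (R : comUnitRingType) (O : set (set R)) (Rp : set R) : Prop :=
  huber_pair O Rp /\ exists x, pseudo_uniformizer O x.

Definition prod_open (R : pzRingType) (O : set (set R)) (n : nat)
  (V : set 'rV[R]_n) : Prop :=
  forall v, V v -> exists U : 'I_n -> set R,
    (forall i, O (U i) /\ U i (v ord0 i)) /\
    (forall w : 'rV[R]_n, (forall i, U i (w ord0 i)) -> V w).

Definition quot_open (R : comUnitRingType) (O : set (set R)) (P : lmodType R) (n : nat)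
  (f : 'rV[R]_n -> P) (U : set P) : Prop :=
  prod_open O (f @^-1` U).

Definition finite_projective (R : comUnitRingType) (P : lmodType R) : Prop :=
  exists n (f : {linear 'rV[R]_n -> P}) (s : {linear P -> 'rV[R]_n}), cancel s f.

Definition submodule_over (R : comUnitRingType) (Rp : set R) (P : lmodType R)
  (M : set P) : Prop :=
  [/\ M 0, (forall x y, M x -> M y -> M (x + y)) &
      (forall r x, Rp r -> M x -> M (r *: x))].

From HB Require Import structures.
From mathcomp Require Import all_boot all_order all_algebra.
From mathcomp Require Import boolp classical_sets.
Set Implicit Arguments. Unset Strict Implicit.
Import GRing.Theory.
Local Open Scope ring_scope.
Local Open Scope classical_set_scope.

(* Since [M[1/pi] = P], some power [pi^K] pushes the images of the finitely
   many basis vectors [e_i] of [R^n] into [M]; as [M] is an [R^+]-module, it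
   then contains the image of the lattice [pi^K (R^+)^n].  Hence the preimage
   of [M] in [R^n] contains, around each of its points [w], the product
   neighbourhood [w + pi^K (R^+)^n], which is open because [R^+] is. *)

Lemma open_of_nbhs (T : Type) (O : set (set T)) (S : set T) :
  is_topology O -> (forall x, S x -> exists V, [/\ O V, V x & V `<=` S]) -> O S.
Proof.
case=> _ _ _ Obigcup Snbhs.
have -> : S = \bigcup_(V in [set V | O V /\ V `<=` S]) V.
  apply/seteqP; split=> [x /Snbhs [V [OV Vx VS]]|x [V [_ VS] /VS //]].
  by exists V.
by apply: Obigcup => V [].
Qed.

Lemma open_affine_preimage (R : pzRingType) (O : set (set R)) (U : set R) (c w : R) :
  topological_ring O -> O U -> O [set a | U (c * (a - w))].
Proof.
case=> Otop Oadd _ Omul OU; apply: open_of_nbhs => // a Ua.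
have [V [W [_ OW Vc Wa VW]]] := Omul U c (a - w) OU Ua.
have [V' [W' [OV' _ V'a W'w V'W']]] := Oadd W a (- w) OW Wa.
by exists V'; split=> // b V'b; apply: VW Vc _; apply: V'W'.
Qed.

Section Subring.

Variables (R : pzRingType) (A : set R).
Hypothesis subringA : is_subring A.

Lemma subring0 : A 0.
Proof. by case: subringA => A1 AB _; rewrite -(subrr 1); apply: AB. Qed.

Lemma subring_exprn (x : R) (k : nat) : A x -> A (x ^+ k).
Proof.
case: subringA => A1 _ AM Ax.
by elim: k => [|k IHk]; rewrite ?expr0 // exprS; apply: AM.
Qed.

End Subring.

Section Submodule.

Variables (R : comUnitRingType) (Rp : set R) (P : lmodType R) (M : set P).
Hypotheses (subringRp : is_subring Rp) (submodM : submodule_over Rp M).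

Lemma submodule_sum (I : Type) (r : seq I) (Pr : pred I) (F : I -> P) :
  (forall i, Pr i -> M (F i)) -> M (\sum_(i <- r | Pr i) F i).
Proof.
by case: submodM => M0 MD _ MF; apply: (big_ind M) => // i /MF.
Qed.

Lemma submodule_scale_exprn_mono (pi : R) (x : P) (k K : nat) : Rp pi ->
  (k <= K)%N -> M (pi ^+ k *: x) -> M (pi ^+ K *: x).
Proof.
case: submodM => _ _ MZ Rppi leKk Mx.
rewrite -(subnK leKk) exprD -scalerA; apply: MZ Mx.
exact: subring_exprn.
Qed.

Lemma submodule_absorbs_seq (pi : R) (s : seq P) : Rp pi ->
  (forall x, exists k, M (pi ^+ k *: x)) ->
  exists K, forall x, x \in s -> M (pi ^+ K *: x).
Proof.
move=> Rppi absorbM; elim: s => [|y s [K IHs]]; first by exists 0%N.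
have [k My] := absorbM y.
exists (maxn K k) => x; rewrite inE => /predU1P [->|xs].
  exact: submodule_scale_exprn_mono (leq_maxr K k) My.
exact: submodule_scale_exprn_mono (leq_maxl K k) (IHs x xs).
Qed.

Lemma submodule_contains_lattice_image (n : nat) (f : {linear 'rV[R]_n -> P})
    (c : R) (v : 'rV[R]_n) : c \is a GRing.unit ->
  (forall i, M (c *: f (delta_mx 0 i))) -> (forall i, Rp (c^-1 * v 0 i)) ->
  M (f v).
Proof.
case: submodM => _ _ MZ c_unit Mbasis Rpv.
rewrite (row_sum_delta v) linear_sum; apply: submodule_sum => i _.
rewrite linearZ /= -[v 0 i](mulVKr c_unit) mulrC -scalerA.
exact: MZ.
Qed.

End Submodule.

Theorem lemma2p3 (R : comUnitRingType) (O : set (set R)) (Rp : set R)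
  (HR : tate_huber_pair O Rp)
  (pi : R) (Hpi : pseudo_uniformizer O pi) (HpiRp : Rp pi)
  (P : lmodType R) (HP : finite_projective P)
  (n : nat) (f : {linear 'rV[R]_n -> P}) (Hf : forall y : P, exists x, f x = y)
  (M : set P) (HM : submodule_over Rp M)
  (HMP : forall x : P, exists (k : nat) (m : P), M m /\ x = pi ^- k *: m) :
  quot_open O f M.
Proof.
case: HR => [[[topO _] [subringRp ORp _ _]] _].
have pi_unit : pi \is a GRing.unit by case: Hpi.
have absorbM : forall x, exists k, M (pi ^+ k *: x).
  move=> x; have [k [m [Mm ->]]] := HMP x.
  by exists k; rewrite scalerA mulrV ?scale1r // unitrX.
have [K MpiK] := submodule_absorbs_seq subringRp HM
  [seq f (delta_mx 0 i) | i <- enum 'I_n] HpiRp absorbM.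
have piK_unit : pi ^+ K \is a GRing.unit by rewrite unitrX.
move=> w Mfw.
exists (fun i => [set a | Rp ((pi ^+ K)^-1 * (a - w 0 i))]); split.
  move=> i; split; first exact: open_affine_preimage topO ORp.
  by rewrite /= subrr mulr0; apply: subring0.
move=> w' near_w'; rewrite /preimage /= -[w'](subrK w) linearD addrC.
have [_ MD _] := HM; apply: MD => //.
apply: (submodule_contains_lattice_image HM) piK_unit _ _ => i.
  by apply: MpiK; apply: map_f; rewrite mem_enum.
by rewrite !mxE; apply: near_w'.
Qed.
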